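(* Let $\delta=\delta_1^{x_1}\cdots\delta_n^{x_n}$ with distinct primes $\delta_i$, and let $f$ be a function on $2\times2$ rational matrices. Writing elements of $\mathbb{M}_\delta$ as $A=\begin{pmatrix} n_1&l_1\\ n_2&\tfrac1\delta l_2\end{pmatrix}$, it holds, at least as a formal sum, $$\sum_{\substack{A\in\mathbb{M}_\delta,\ A\neq0,\ \det A=0\\ \delta_1\nmid l_2\,\wedge\dots\wedge\,\delta_n\nmid l_2}}f(A)=\frac12\sum_{l=0}^{n}(-1)^l\sum_{\delta^{(l)}\in\mathcal{C}_l(\delta)}\ \sum_{\substack{j,p\in\mathbb{Z}\\ (j,p)\neq(0,0)}}\ \sum_{P\in\Gamma_0(\delta)/\langle T\rangle}f\left(\begin{pmatrix}0&j\\0&\frac{\delta^{(l)}}{\delta}p\end{pmatrix}\cdot P\right).$$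
   Context: $\mathbb{M}_\delta=\{\begin{pmatrix} n_1&l_1\\ n_2&\tfrac1\delta l_2\end{pmatrix}: n_1,n_2,l_1,l_2\in\mathbb{Z}\}$. $\Gamma_0(\delta)=\{\begin{pmatrix}a&b\\ \delta c&d\end{pmatrix}\in\mathrm{SL}(2,\mathbb{Z})\}$, $T=\begin{pmatrix}1&1\\0&1\end{pmatrix}$, and $\Gamma_0(\delta)/\langle T\rangle$ is the set of classes of $\Gamma_0(\delta)$ under $P_1\sim P_2\iff P_1=T^mP_2$ for some $m\in\mathbb{Z}$ (the sum runs over one representative per class). $\mathcal{C}_l(\delta)$ is the set of all products of $l$ distinct prime factors of $\delta$, with $\mathcal{C}_0(\delta)=\{1\}$. *)

From HB Require Import structures.
From mathcomp Require Import all_boot all_order all_algebra.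
From mathcomp Require Import boolp classical_sets cardinality fsbigop.
Set Implicit Arguments. Unset Strict Implicit. Unset Printing Implicit Defensive.
Import Order.TTheory GRing.Theory Num.Theory.
Local Open Scope ring_scope.
Local Open Scope classical_set_scope.

Definition mx22 (R : Type) (a b c d : R) : 'M[R]_2 :=
  \matrix_(i < 2, j < 2)
    if i == 0 :> nat then (if j == 0 :> nat then a else b)
    else (if j == 0 :> nat then c else d).

Definition Mdelta_elt (delta : nat) (n1 l1 n2 l2 : int) : 'M[rat]_2 :=
  mx22 (n1%:~R) (l1%:~R) (n2%:~R) (l2%:~R / delta%:R).

Definition Gamma0 (delta : nat) : set 'M[int]_2 :=
  [set P : 'M[int]_2 | \det P = 1 /\ (delta%:Z %| P ord_max ord0)%Z].

Definition Tmat : 'M[int]_2 := mx22 1 1 0 1.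

(* Rep is a set of representatives of Gamma_0(delta)/<T>, where
   P1 ~ P2 iff P1 = T^m P2 for some integer m: exactly one per class. *)
Definition T_transversal (delta : nat) (Rep : set 'M[int]_2) : Prop :=
  Rep `<=` Gamma0 delta /\
  forall P, Gamma0 delta P ->
    exists! Q, Rep Q /\ exists m : int, P = Tmat ^ m *m Q.

Definition Cl (n : nat) (ds : 'I_n -> nat) (l : nat) : set nat :=
  [set d | exists I : {set 'I_n}, #|I| = l /\ d = (\prod_(i in I) ds i)%N].

Definition delta_of (n : nat) (ds : 'I_n -> nat) (x : 'I_n -> nat) : nat :=
  (\prod_(i < n) ds i ^ x i)%N.

Definition lhs_set (n : nat) (ds : 'I_n -> nat) (delta : nat) : set 'M[rat]_2 :=
  [set A | exists n1 l1 n2 l2 : int,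
     A = Mdelta_elt delta n1 l1 n2 l2 /\ A != 0 /\ \det A = 0 /\
     forall i : 'I_n, ~~ ((ds i)%:Z %| l2)%Z].

Definition Bmat (delta d : nat) (j p : int) : 'M[rat]_2 :=
  mx22 0 (j%:~R) 0 (d%:R / delta%:R * p%:~R).

Definition rhs_idx (Rep : set 'M[int]_2) : set (int * int * 'M[int]_2) :=
  [set x | (x.1.1, x.1.2) != (0, 0) /\ Rep x.2].

From HB Require Import structures.
From mathcomp Require Import all_boot all_order all_algebra.
From mathcomp Require Import boolp classical_sets cardinality fsbigop.
From mathcomp Require Import finmap functions.
From mathcomp Require Import ring.
Import Order.TTheory GRing.Theory Num.Theory.
Set Implicit Arguments. Unset Strict Implicit. Unset Printing Implicit Defensive.
Local Open Scope ring_scope.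
Local Open Scope classical_set_scope.

(* A nonzero singular matrix of M_delta factors as the column (j, q / delta) times a
   primitive row (c, e), uniquely up to a common sign.  If no delta_i divides l2 = q e,
   then delta is coprime to q, so it divides c (as n2 = q c / delta is an integer), and
   the condition on l2 only concerns q.  On the right-hand side, [Bmat delta d j p *m P]
   is the factorisation with column (j, d p / delta) and row the bottom row of P; as
   every primitive row (c, e) with delta | c is the bottom row of exactly one
   representative P, the triples (j, p, P) with fixed d reach every factorisation with
   d | q exactly twice, once for each sign.  Inclusion-exclusion over the squarefree
   divisors d of delta then isolates the matrices for which no delta_i divides q. *)

(** * 2x2 matrices *)

Lemma mx22_eta (R : Type) (M : 'M[R]_2) :
  M = mx22 (M ord0 ord0) (M ord0 ord_max) (M ord_max ord0) (M ord_max ord_max).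
Proof.
apply/matrixP => i j; rewrite mxE.
by case: i => [[|[|i]] Hi] //; case: j => [[|[|j]] Hj] //=; congr (M _ _); apply: val_inj.
Qed.

Lemma mx22_inj (R : Type) (a b c d a' b' c' d' : R) :
  mx22 a b c d = mx22 a' b' c' d' -> [/\ a = a', b = b', c = c' & d = d'].
Proof.
move=> /matrixP E.
by move: (E ord0 ord0) (E ord0 ord_max) (E ord_max ord0) (E ord_max ord_max); rewrite !mxE.
Qed.

Lemma mx22_eq0 (R : nmodType) (a b c d : R) :
  (mx22 a b c d == 0) = [&& a == 0, b == 0, c == 0 & d == 0].
Proof.
apply/eqP/and4P => [/matrixP E|[/eqP-> /eqP-> /eqP-> /eqP->]].
  move: (E ord0 ord0) (E ord0 ord_max) (E ord_max ord0) (E ord_max ord_max).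
  by rewrite !mxE /= => -> -> -> ->.
by apply/matrixP => i j; rewrite !mxE; case: ifP; case: ifP.
Qed.

Lemma map_mx22 (R S : Type) (g : R -> S) (a b c d : R) :
  map_mx g (mx22 a b c d) = mx22 (g a) (g b) (g c) (g d).
Proof. by apply/matrixP => i j; rewrite !mxE; case: ifP; case: ifP. Qed.

Lemma mul_mx22 (R : pzSemiRingType) (a b c d a' b' c' d' : R) :
  mx22 a b c d *m mx22 a' b' c' d' =
  mx22 (a * a' + b * c') (a * b' + b * d') (c * a' + d * c') (c * b' + d * d').
Proof.
apply/matrixP => i j; rewrite !mxE !big_ord_recl big_ord0 !mxE /= addr0.
by case: ifP; case: ifP.
Qed.

Lemma det_mx22 (R : comPzRingType) (a b c d : R) :
  \det (mx22 a b c d) = a * d - b * c.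
Proof.
rewrite (expand_det_row _ ord0) !big_ord_recl big_ord0 /cofactor !det_mx11 !mxE /=.
by rewrite expr0 expr1 mul1r mulN1r addr0 mulrN.
Qed.

Lemma mx22_upper_mul (a b : int) : mx22 1 a 0 1 *m mx22 1 b 0 1 = mx22 1 (a + b) 0 1.
Proof. by rewrite mul_mx22; congr mx22; ring. Qed.

Lemma exprz_Tmat (m : int) : Tmat ^ m = mx22 1 m 0 1.
Proof.
have exprn_Tmat k : Tmat ^+ k = mx22 1 k%:Z 0 1.
  elim: k => [|k IH]; first by rewrite expr0 [LHS](mx22_eta 1) !mxE.
  by rewrite exprS IH -mulmxE mx22_upper_mul addrC -PoszD addn1.
case: m => k; first exact: exprn_Tmat.
rewrite -[Tmat ^ _]/((Tmat ^+ k.+1)^-1) exprn_Tmat NegzE.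
have inv_left : mx22 1 (- k.+1%:Z) 0 1 * mx22 1 k.+1%:Z 0 1 = 1.
  by rewrite -mulmxE mx22_upper_mul addNr [RHS](mx22_eta 1) !mxE.
have inv_right : mx22 1 k.+1%:Z 0 1 * mx22 1 (- k.+1%:Z) 0 1 = 1.
  by rewrite -mulmxE mx22_upper_mul addrN [RHS](mx22_eta 1) !mxE.
have unitT : mx22 1 k.+1%:Z 0 1 \is a GRing.unit.
  by apply/unitrP; exists (mx22 1 (- k.+1%:Z) 0 1).
by rewrite -[LHS]mul1r -inv_left mulrK.
Qed.

Lemma exprz_Tmat_mul (m : int) (P : 'M[int]_2) :
  Tmat ^ m *m P = mx22 (P ord0 ord0 + m * P ord_max ord0)
    (P ord0 ord_max + m * P ord_max ord_max) (P ord_max ord0) (P ord_max ord_max).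
Proof. by rewrite exprz_Tmat {1}[P]mx22_eta mul_mx22; congr mx22; ring. Qed.

(** * Rank-one integer matrices *)

Lemma coprimez_neq0 (c e : int) : coprimez c e -> (c != 0) || (e != 0).
Proof.
by apply: contraLR; rewrite negb_or !negbK => /andP[/eqP-> /eqP->]; rewrite /coprimez gcdz0.
Qed.

Lemma coprimez_det (a b c e : int) : a * e - b * c = 1 -> coprimez c e.
Proof. by move=> det1; apply/coprimezP; exists (- b, a) => /=; rewrite -det1; ring. Qed.

Lemma mulIf_pair (R : idomainType) (a b c e : R) : (c != 0) || (e != 0) ->
  a * c = b * c -> a * e = b * e -> a = b.
Proof. by case/orP => [/mulIf + ac _ | /mulIf + _ ae]; apply. Qed.

(* Bezout: if u c + v e = 1, then k = u c' + v e'. *)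
Lemma coprimez_parallel (c e c' e' : int) : coprimez c e -> c * e' = e * c' ->
  exists k, c' = k * c /\ e' = k * e.
Proof.
case/coprimezP => -[u v] /= uv cross; exists (u * c' + v * e').
split.
  transitivity ((u * c + v * e) * c' + v * (c * e' - e * c')); last by ring.
  by rewrite cross subrr mulr0 addr0 uv mul1r.
transitivity ((u * c + v * e) * e' + u * (e * c' - c * e')); last by ring.
by rewrite cross subrr mulr0 addr0 uv mul1r.
Qed.

Lemma coprimez_parallel_sign (c e c' e' : int) : coprimez c e -> coprimez c' e' ->
  c * e' = e * c' -> exists2 l : int, l = 1 \/ l = -1 & c' = l * c /\ e' = l * e.
Proof.
move=> ce ce' cross.
have [k [kc ke]] := coprimez_parallel ce cross.
have [k' [k'c k'e]] : exists k', c = k' * c' /\ e = k' * e'.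
  by apply: coprimez_parallel ce' _; rewrite mulrC -cross mulrC.
have kk' : k' * k = 1.
  by apply: (mulIf_pair (coprimez_neq0 ce)); rewrite mul1r -mulrA -?kc -?ke.
exists k => //; have : k \is a GRing.unit by apply/unitrPr; exists k'; rewrite mulrC.
by rewrite unfold_in /= => /orP[] /eqP; [left|right].
Qed.

Lemma primitive_factor (a b : int) : (a != 0) || (b != 0) ->
  exists g c e, [/\ coprimez c e, a = g * c & b = g * e].
Proof.
move=> ab; have [u [v uv]] := Bezoutz a b.
set g := gcdz a b in uv.
have g0 : g != 0 by rewrite gcdz_eq0 negb_and.
have ag : a = (a %/ g)%Z * g by rewrite divzK // dvdz_gcdl.
have bg : b = (b %/ g)%Z * g by rewrite divzK // dvdz_gcdr.
exists g, (a %/ g)%Z, (b %/ g)%Z; rewrite ![g * _]mulrC -ag -bg; split => //.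
apply/coprimezP; exists (u, v) => /=; apply: (mulIf g0).
by rewrite mul1r -[in RHS]uv [in RHS]ag [in RHS]bg; ring.
Qed.

Lemma rank1_factor (a b c' d' : int) : a * d' = b * c' ->
  [|| a != 0, b != 0, c' != 0 | d' != 0] ->
  exists j q c e, [/\ coprimez c e, a = j * c, b = j * e, c' = q * c & d' = q * e].
Proof.
move=> det0; have [ab _|] := boolP ((a != 0) || (b != 0)).
  have [j [c [e [ce aE bE]]]] := primitive_factor ab; subst a b.
  have j0 : j != 0 by move: ab; apply: contraTneq => ->; rewrite !mul0r eqxx.
  have [q [-> ->]] : exists q, c' = q * c /\ d' = q * e.
    by apply: coprimez_parallel ce _; apply: (mulfI j0); rewrite !mulrA.
  by exists j, q, c, e.
rewrite negb_or !negbK => /andP[/eqP-> /eqP->] /= /primitive_factor[q [c [e [ce -> ->]]]].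
by exists 0, q, c, e; rewrite !mul0r.
Qed.

Lemma rank1_factor_uniq (j q c e j' q' c' e' : int) :
  coprimez c e -> coprimez c' e' -> (j != 0) || (q != 0) ->
  j * c = j' * c' -> j * e = j' * e' -> q * c = q' * c' -> q * e = q' * e' ->
  exists2 l : int, l = 1 \/ l = -1 & [/\ c' = l * c, e' = l * e, j' = l * j & q' = l * q].
Proof.
move=> ce ce' jq jc je qc qe.
have cross : c * e' = e * c'.
  case/orP: jq => [j0|q0]; [apply: (mulfI j0) | apply: (mulfI q0)];
    by rewrite !mulrA ?jc ?je ?qc ?qe -!mulrA [e' * _]mulrC.
have [l l1 [c'E e'E]] := coprimez_parallel_sign ce ce' cross.
have ll : l * l = 1 by case: l1 => ->.
have ce0 := coprimez_neq0 ce.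
have jl : j = j' * l by apply: (mulIf_pair ce0); rewrite -mulrA -?c'E -?e'E.
have ql : q = q' * l by apply: (mulIf_pair ce0); rewrite -mulrA -?c'E -?e'E.
by exists l => //; split; rewrite // ?jl ?ql mulrCA ll mulr1.
Qed.

(** * The representatives of Gamma_0(delta)/<T> *)

Lemma Gamma0_det d (P : 'M[int]_2) : Gamma0 d P ->
  P ord0 ord0 * P ord_max ord_max - P ord0 ord_max * P ord_max ord0 = 1.
Proof. by case; rewrite {1}[P]mx22_eta det_mx22. Qed.

Lemma Gamma0_coprime d (P : 'M[int]_2) : Gamma0 d P ->
  coprimez (P ord_max ord0) (P ord_max ord_max).
Proof. by move/Gamma0_det/coprimez_det. Qed.

Lemma same_bottom_row_exprz_Tmat (a b a' b' c e : int) :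
  a * e - b * c = 1 -> a' * e - b' * c = 1 ->
  mx22 a b c e = Tmat ^ (a' * b - a * b') *m mx22 a' b' c e.
Proof.
move=> det1 det1'; rewrite exprz_Tmat_mul !mxE /=; congr mx22.
- transitivity (a * (a' * e - b' * c) - a' * (a * e - b * c - 1)); last by ring.
  by rewrite det1 det1' subrr mulr0 subr0 mulr1.
- transitivity (b * (a' * e - b' * c) - b' * (a * e - b * c - 1)); last by ring.
  by rewrite det1 det1' subrr mulr0 subr0 mulr1.
Qed.

Section Transversal.
Variables (d : nat) (Rep : set 'M[int]_2).
Hypothesis hRep : T_transversal d Rep.

Lemma T_transversal_row (c e : int) : coprimez c e -> (d%:Z %| c)%Z ->
  exists P, [/\ Rep P, P ord_max ord0 = c & P ord_max ord_max = e].
Proof.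
move=> /coprimezP[[u v] /= uv] dc.
have G0 : Gamma0 d (mx22 v (- u) c e).
  by split; rewrite ?mxE // det_mx22 -uv; ring.
have [Q [[RQ [m PQ]] _]] := hRep.2 _ G0.
rewrite exprz_Tmat_mul in PQ; have [_ _ -> ->] := mx22_inj PQ.
by exists Q.
Qed.

Lemma T_transversal_row_inj (P P' : 'M[int]_2) : Rep P -> Rep P' ->
  P ord_max ord0 = P' ord_max ord0 -> P ord_max ord_max = P' ord_max ord_max -> P = P'.
Proof.
move=> RP RP' c_eq e_eq.
have GP := hRep.1 _ RP; have [Q [_ Q_uniq]] := hRep.2 _ GP.
have -> : P = Q.
  by apply/esym/Q_uniq; split => //; exists 0; rewrite exprz_Tmat_mul !mul0r !addr0 -mx22_eta.
apply: Q_uniq; split => //.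
move: (Gamma0_det GP) (Gamma0_det (hRep.1 _ RP')); rewrite -c_eq -e_eq => det1 det1'.
by rewrite [P]mx22_eta [P']mx22_eta -c_eq -e_eq; eexists; apply: same_bottom_row_exprz_Tmat.
Qed.

End Transversal.

(** * Rank-one matrices of M_delta *)

Definition rank1_mx (delta : nat) (j q c e : int) : 'M[rat]_2 :=
  mx22 (j * c)%:~R (j * e)%:~R ((q * c)%:~R / delta%:R) ((q * e)%:~R / delta%:R).

Lemma Bmat_mul_rank1 (delta d : nat) (j p : int) (P : 'M[int]_2) :
  Bmat delta d j p *m map_mx intr P =
  rank1_mx delta j (d%:Z * p) (P ord_max ord0) (P ord_max ord_max).
Proof.
rewrite {1}[P]mx22_eta map_mx22 mul_mx22 /rank1_mx !mul0r !add0r !intrM -pmulrn.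
by congr mx22; ring.
Qed.

Lemma rank1_mxN (delta : nat) (j q c e : int) :
  rank1_mx delta (- j) (- q) (- c) (- e) = rank1_mx delta j q c e.
Proof. by rewrite /rank1_mx !mulrNN. Qed.

Lemma rank1_mx_inj (delta : nat) (j q c e j' q' c' e' : int) : (0 < delta)%N ->
  rank1_mx delta j q c e = rank1_mx delta j' q' c' e' ->
  [/\ j * c = j' * c', j * e = j' * e', q * c = q' * c' & q * e = q' * e'].
Proof.
move=> delta_gt0; move/(@mx22_inj rat)=> [jc je qc qe].
have delta_neq0 : (delta%:R : rat)^-1 != 0 by rewrite invr_eq0 pnatr_eq0 -lt0n.
by split; apply: (@intr_inj rat); rewrite // (mulIf delta_neq0 qc, mulIf delta_neq0 qe).
Qed.

Lemma rank1_mx_neq0 (delta : nat) (j q c e : int) : (0 < delta)%N ->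
  (j != 0) || (q != 0) -> (c != 0) || (e != 0) -> rank1_mx delta j q c e != 0.
Proof.
move=> delta_gt0 jq ce; rewrite mx22_eq0 !mulf_eq0 !intr_eq0 !mulf_eq0.
have -> : ((delta%:R : rat)^-1 == 0) = false by rewrite invr_eq0 pnatr_eq0 gtn_eqF.
rewrite !orbF.
by case/orP: jq => /negPf->; case/orP: ce => /negPf->; rewrite ?andbF.
Qed.

Lemma Mdelta_elt_rank1 (delta : nat) (j q c e : int) : (0 < delta)%N -> (delta%:Z %| c)%Z ->
  rank1_mx delta j q c e = Mdelta_elt delta (j * c) (j * e) (q * (c %/ delta%:Z)%Z) (q * e).
Proof.
move=> delta_gt0 dvd_c; have delta_neq0 : (delta%:R : rat) != 0 by rewrite pnatr_eq0 -lt0n.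
rewrite /rank1_mx /Mdelta_elt; congr mx22.
by rewrite -{1}(divzK dvd_c) mulrA intrM -pmulrn mulfK.
Qed.

(* By [Bmat_mul_rank1] and [T_transversal_row], these are the matrices
   [Bmat delta d j p *m P] of the right-hand side. *)
Definition rank1_set (delta d : nat) : set 'M[rat]_2 :=
  [set A | exists j q c e : int, [/\ (j != 0) || (q != 0), coprimez c e,
     (delta%:Z %| c)%Z, (d%:Z %| q)%Z & A = rank1_mx delta j q c e]].

Lemma rank1_set_sub1 (delta d : nat) : rank1_set delta d `<=` rank1_set delta 1.
Proof. by move=> A [j [q [c [e [jq ce dc _ ->]]]]]; exists j, q, c, e; rewrite dvd1z. Qed.

Lemma rank1_setP (delta d : nat) (j q c e : int) : (0 < delta)%N ->
  (j != 0) || (q != 0) -> coprimez c e -> (delta%:Z %| c)%Z ->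
  rank1_set delta d (rank1_mx delta j q c e) <-> (d%:Z %| q)%Z.
Proof.
move=> delta_gt0 jq ce dc; split=> [|dq]; last by exists j, q, c, e.
move=> [j' [q' [c' [e' [_ ce' _ dq' /(rank1_mx_inj delta_gt0)[jc je qc qe]]]]]].
have [l l1 [_ _ _ q'E]] := rank1_factor_uniq ce ce' jq jc je qc qe.
by move: dq'; rewrite !dvdzE q'E abszM; case: l1 => ->; rewrite mul1n.
Qed.

Lemma det_rank1_mx (delta : nat) (j q c e : int) : \det (rank1_mx delta j q c e) = 0.
Proof. by rewrite det_mx22 !intrM; ring. Qed.

Lemma Mdelta_elt_singular (delta : nat) (n1 l1 n2 l2 : int) : (0 < delta)%N ->
  Mdelta_elt delta n1 l1 n2 l2 != 0 -> \det (Mdelta_elt delta n1 l1 n2 l2) = 0 ->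
  exists j q c e, [/\ (j != 0) || (q != 0), coprimez c e, delta%:Z * n2 = q * c,
    l2 = q * e & Mdelta_elt delta n1 l1 n2 l2 = rank1_mx delta j q c e].
Proof.
move=> delta_gt0 A0 det0.
have delta_neq0 : (delta%:R : rat) != 0 by rewrite pnatr_eq0 -lt0n.
have deltaZ_neq0 : delta%:Z != 0 by rewrite -lt0n.
have det0' : n1 * l2 = l1 * (delta%:Z * n2).
  move/eqP: det0; rewrite det_mx22 subr_eq0 => /eqP E; apply: (@intr_inj rat).
  by rewrite !intrM -pmulrn mulrCA -E mulrCA [delta%:R * _]mulrC divfK.
have nz : [|| n1 != 0, l1 != 0, delta%:Z * n2 != 0 | l2 != 0].
  move: A0; apply: contraNT; rewrite !negb_or !negbK mulf_eq0 (negbTE deltaZ_neq0) /=.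
  by case/and4P => /eqP-> /eqP-> /eqP-> /eqP->; rewrite mx22_eq0 !mul0r !eqxx.
have [j [q [c [e [ce n1E l1E n2E l2E]]]]] := rank1_factor det0' nz.
exists j, q, c, e; split => //.
- move: nz; apply: contraTT; rewrite negb_or !negbK => /andP[/eqP j0 /eqP q0].
  by rewrite n1E l1E n2E l2E j0 q0 !mul0r !eqxx.
- rewrite /Mdelta_elt /rank1_mx -n1E -l1E -n2E -l2E intrM -pmulrn [delta%:R * _]mulrC.
  by congr mx22; rewrite mulfK.
Qed.

Section Delta.
Variables (n : nat) (ds x : 'I_n -> nat).
Hypothesis ds_prime : forall i, prime (ds i).
Hypothesis x_pos : forall i, (0 < x i)%N.
Local Notation delta := (delta_of ds x).

Lemma delta_gt0 : (0 < delta)%N.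
Proof. by rewrite prodn_gt0 // => i; rewrite expn_gt0 prime_gt0. Qed.

Lemma coprime_delta m : (forall i, ~~ (ds i %| m)%N) -> coprime delta m.
Proof.
move=> nd; apply: (big_ind (fun k => coprime k m)) => [|a b ca cb|i _].
- exact: coprime1n.
- by rewrite coprimeMl ca cb.
- by apply: coprimeXl; rewrite prime_coprime.
Qed.

Lemma dvdn_delta i : (ds i %| delta)%N.
Proof.
rewrite /delta_of (bigD1 i) //= dvdn_mulr //.
by rewrite -(prednK (x_pos i)) expnS dvdn_mulr.
Qed.

(* The condition on l2 = q e only sees q: each delta_i divides delta | c, coprime to e. *)
Lemma lhs_set_rank1P (j q c e : int) :
  (j != 0) || (q != 0) -> coprimez c e -> (delta%:Z %| c)%Z ->
  lhs_set ds delta (rank1_mx delta j q c e) <-> forall i, ~~ ((ds i)%:Z %| q)%Z.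
Proof.
move=> jq ce dc; rewrite Mdelta_elt_rank1 ?delta_gt0 //.
split=> [[n1 [l1 [n2 [l2 [/(@mx22_inj rat)[_ _ _ l2E] [_ [_ nd]]]]]]] i|nd].
  have delta_neq0 : (delta%:R : rat)^-1 != 0 by rewrite invr_eq0 pnatr_eq0 -lt0n delta_gt0.
  move/(mulIf delta_neq0)/(@intr_inj rat): l2E => l2E.
  by apply: contra (nd i); rewrite -l2E; apply: dvdz_mulr.
exists (j * c), (j * e), (q * (c %/ delta%:Z)%Z), (q * e); split=> //.
rewrite -Mdelta_elt_rank1 ?delta_gt0 // det_rank1_mx; split; last split=> // i.
  exact: rank1_mx_neq0 delta_gt0 jq (coprimez_neq0 ce).
have nde : ~~ (ds i %| `|e|)%N.
  rewrite -prime_coprime //; apply: (@coprime_dvdl _ `|c|) ce.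
  exact: dvdn_trans (dvdn_delta i) dc.
by rewrite dvdzE abszM /= Euclid_dvdM // negb_or nde andbT; apply: nd.
Qed.

Lemma lhs_set_sub : lhs_set ds delta `<=` rank1_set delta 1.
Proof.
move=> _ [n1 [l1 [n2 [l2 [-> [A0 [det0 nd]]]]]]].
have [j [q [c [e [jq ce n2E l2E ->]]]]] := Mdelta_elt_singular delta_gt0 A0 det0.
exists j, q, c, e; split; rewrite ?dvd1z //.
have coprime_q : coprimez delta%:Z q.
  rewrite coprimezE; apply: coprime_delta => i.
  by apply: contra (nd i); rewrite l2E dvdzE abszM; apply: dvdn_mulr.
by rewrite -(Gauss_dvdzr _ coprime_q) -n2E dvdz_mulr.
Qed.

End Delta.

(** * Finitely supported sums *)

Lemma fsbig_finType (R : nmodType) (T : finType) (P : set T) (F : T -> R) :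
  \sum_(i \in P) F i = \sum_(i | `[< P i >]) F i.
Proof.
have -> : P = [set` (fun i => `[< P i >]) : pred T].
  by apply/seteqP; split => i /=; rewrite ?asboolE.
rewrite -(bigfs _ (enum_uniq T)); last by move=> i _; rewrite mem_enum.
by rewrite big_enum_cond; apply: eq_bigl => i /=; apply/asboolP/asboolP => /asboolP.
Qed.

Lemma fsbig_setXbool (R : nmodType) (T : choiceType) (X : set T) (g : T -> R) :
  finite_set [set t | g t != 0] ->
  \sum_(p \in X `*` [set: bool]) g p.1 = (\sum_(t \in X) g t) *+ 2.
Proof.
move=> gfin; have XSfin : finite_set (X `&` g @^-1` [set~ 0]).
  by apply: sub_finite_set gfin => t [_ /eqP].
rewrite fsbig_supp [in RHS]fsbig_supp.
have -> : (X `*` [set: bool]) `&` (fun p => g p.1) @^-1` [set~ 0] =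
    (X `&` g @^-1` [set~ 0]) `*` [set: bool].
  by apply/seteqP; split => -[t b] /= [[Xt Tb] gt].
transitivity (\sum_(t \in X `&` g @^-1` [set~ 0]) \sum_(b \in [set: bool]) g t).
  by rewrite pair_fsbig //; exact: finite_finset.
have sum_bool (c : R) : \sum_(b \in [set: bool]) c = c *+ 2.
  by rewrite fsbig_finType big_mkcond big_bool !asboolT.
rewrite (eq_fsbigr (fun t => g t *+ 2) _ (fun t _ => sum_bool (g t))).
by rewrite !fsbig_finite //= sumrMnl.
Qed.

(** * The right-hand side *)

Definition lex_pos (c e : int) : bool := (0 < c) || ((c == 0) && (0 < e)).

Lemma lex_posN (c e : int) : (c != 0) || (e != 0) -> lex_pos (- c) (- e) = ~~ lex_pos c e.
Proof. by rewrite /lex_pos !oppr_gt0 oppr_eq0; case: ltrgt0P; case: ltrgt0P. Qed.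

Lemma pair_neq0_mull (j p k : int) : k != 0 -> ((j, p) != (0, 0)) = (j != 0) || (k * p != 0).
Proof. by move=> k0; rewrite xpair_eqE negb_and mulf_eq0 (negbTE k0). Qed.

Section RightHandSide.
Variables (delta d : nat) (Rep : set 'M[int]_2).
Hypotheses (delta_gt0 : (0 < delta)%N) (d_gt0 : (0 < d)%N).
Hypothesis hRep : T_transversal delta Rep.

Let dZ : d%:Z != 0. Proof. by rewrite -lt0n. Qed.

(* [(j, p, P)] and [(-j, -p, P')], where P' has the opposite bottom row, give the same
   matrix; the sign of the bottom row of P tells them apart. *)
Definition rhs_map (y : int * int * 'M[int]_2) : 'M[rat]_2 * bool :=
  (Bmat delta d y.1.1 y.1.2 *m map_mx intr y.2,
   lex_pos (y.2 ord_max ord0) (y.2 ord_max ord_max)).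

Lemma rhs_map_inj : set_inj (rhs_idx Rep) rhs_map.
Proof.
move=> [[j p] P] [[j' p'] P'] /set_mem[/= jp RP] /set_mem[/= jp' RP'].
rewrite /rhs_map /= !Bmat_mul_rank1.
move=> /pair_equal_spec[/(rank1_mx_inj delta_gt0)[jc je qc qe] lex_eq].
have jq : (j != 0) || (d%:Z * p != 0) by rewrite -(pair_neq0_mull _ _ dZ).
have ce := Gamma0_coprime (hRep.1 _ RP).
have ce' := Gamma0_coprime (hRep.1 _ RP').
have [l [->|->] [c'E e'E j'E q'E]] := rank1_factor_uniq ce ce' jq jc je qc qe.
  rewrite !mul1r in c'E e'E j'E q'E.
  by rewrite j'E (mulfI dZ q'E) (T_transversal_row_inj hRep RP RP').
by move: lex_eq; rewrite c'E e'E !mulN1r lex_posN ?(coprimez_neq0 ce) //; case: lex_pos.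
Qed.

Lemma rhs_map_image : rhs_map @` rhs_idx Rep = rank1_set delta d `*` [set: bool].
Proof.
apply/seteqP; split=> [_ [[[j p] P] [/= jp RP] <-]|].
  split=> //=; rewrite Bmat_mul_rank1.
  exists j, (d%:Z * p), (P ord_max ord0), (P ord_max ord_max).
  have [_ dvd_c] := hRep.1 _ RP.
  split; rewrite ?dvdz_mulr ?dvdzz //; last exact: Gamma0_coprime (hRep.1 _ RP).
  by move: jp; rewrite (pair_neq0_mull _ _ dZ).
move=> [A b] /= [[j [q [c [e [jq ce dc /dvdzP[p qE] ->]]]]] _]; subst q.
have jp : (j, p) != (0, 0) by move: jq; rewrite (pair_neq0_mull _ _ dZ) mulrC.
rewrite [p * _]mulrC.
have [sgn|sgn] := boolP (lex_pos c e == b).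
  have [P [RP cE eE]] := T_transversal_row hRep ce dc.
  by exists (j, p, P); [split | rewrite /rhs_map /= Bmat_mul_rank1 cE eE (eqP sgn)].
have ce' : coprimez (- c) (- e) by rewrite coprimeNz coprimezN.
have dc' : (delta%:Z %| - c)%Z by rewrite dvdzE abszN.
have [P [RP cE eE]] := T_transversal_row hRep ce' dc'.
exists (- j, - p, P); first by split=> //=; rewrite xpair_eqE !oppr_eq0 -xpair_eqE.
rewrite /rhs_map /= Bmat_mul_rank1 cE eE lex_posN ?(coprimez_neq0 ce) // mulrN rank1_mxN.
by move: sgn; case: (lex_pos c e); case: b.
Qed.

Lemma sum_rhs_idx (R : nmodType) (f : 'M[rat]_2 -> R) :
  finite_set [set A | f A != 0] ->
  \sum_(y \in rhs_idx Rep) f (Bmat delta d y.1.1 y.1.2 *m map_mx intr y.2) =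
  (\sum_(A \in rank1_set delta d) f A) *+ 2.
Proof.
move=> f_fin; rewrite -fsbig_setXbool // -rhs_map_image.
by rewrite (fsbig_image _ _ (fun y => f y.1) rhs_map_inj).
Qed.

End RightHandSide.

(** * Squarefree divisors and inclusion-exclusion *)

Lemma dvdn_prod_primes (I : eqType) (r : seq I) (p : I -> nat) (m : nat) :
  (forall i, prime (p i)) -> injective p -> uniq r ->
  (\prod_(i <- r) p i %| m)%N = \big[andb/true]_(i <- r) (p i %| m)%N.
Proof.
move=> p_prime p_inj; elim: r => [|a r IHr] /=; first by rewrite !big_nil dvd1n.
case/andP => a_notin_r r_uniq; rewrite !big_cons Gauss_dvd ?IHr //.
rewrite prime_coprime // Euclid_dvd_prod // big_has; apply/hasPn => i ri.
by rewrite dvdn_prime2 //; apply: contra a_notin_r => /eqP/p_inj->.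
Qed.

Lemma natr_bigand (R : pzSemiRingType) (I : finType) (P : pred I) (b : I -> bool) :
  ((\big[andb/true]_(i | P i) b i : bool)%:R : R) = \prod_(i | P i) (b i)%:R.
Proof. by apply: (big_morph (fun c : bool => c%:R : R)) => // c1 c2; rewrite -natrM mulnb. Qed.

Lemma sum_subsets_sign (R : pzRingType) (I : finType) (F : I -> R) :
  \sum_(J : {set I}) (-1) ^+ #|J| * \prod_(i in J) F i = \prod_i (1 - F i).
Proof.
rewrite (eq_bigr (fun i => - F i + 1)) => [|i _]; last by rewrite addrC.
rewrite bigA_distr; apply: eq_bigr => J _.
by rewrite -big_mkcond (@prodrN R _ (mem J)).
Qed.

Lemma sum_by_card (R : pzRingType) (n : nat) (g : {set 'I_n} -> R) :
  \sum_(l < n.+1) (-1) ^+ l * \sum_(I : {set 'I_n} | #|I| == l) g I =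
  \sum_(I : {set 'I_n}) (-1) ^+ #|I| * g I.
Proof.
have card_lt (I : {set 'I_n}) : (#|I| < n.+1)%N.
  by rewrite ltnS; apply: leq_trans (max_card _) _; rewrite card_ord.
rewrite (partition_big (fun I => Ordinal (card_lt I)) predT) //=.
by apply: eq_bigr => l _; rewrite big_distrr /=; apply: eq_big => [I|I /eqP <-].
Qed.

Section SquarefreeProducts.
Variables (n : nat) (ds : 'I_n -> nat).
Hypotheses (ds_prime : forall i, prime (ds i)) (ds_inj : injective ds).

Definition prodI (I : {set 'I_n}) : nat := (\prod_(i in I) ds i)%N.

Lemma prodI_gt0 I : (0 < prodI I)%N.
Proof. by rewrite prodn_gt0 // => i; rewrite prime_gt0. Qed.

Lemma prodI_dvdn I m : (prodI I %| m)%N = \big[andb/true]_(i in I) (ds i %| m)%N.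
Proof. by rewrite /prodI -!big_enum /= dvdn_prod_primes ?enum_uniq. Qed.

Lemma dvdn_prodI i I : (ds i %| prodI I)%N = (i \in I).
Proof.
rewrite Euclid_dvd_prod // big_orE; apply/existsP/idP => [[j /andP[jI]]|iI].
  by rewrite dvdn_prime2 // => /eqP/ds_inj->.
by exists i; rewrite iI dvdnn.
Qed.

Lemma prodI_inj : injective prodI.
Proof. by move=> I J IJ; apply/setP => i; rewrite -!dvdn_prodI IJ. Qed.

Lemma fsbig_Cl (R : nmodType) l (K : nat -> R) :
  \sum_(d \in Cl ds l) K d = \sum_(I : {set 'I_n} | #|I| == l) K (prodI I).
Proof.
have -> : Cl ds l = prodI @` [set I : {set 'I_n} | #|I| = l].
  by apply/seteqP; split => [d [I [cI ->]]|d [I cI <-]]; exists I.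
rewrite fsbig_image; last by move=> I J _ _; apply: prodI_inj.
by rewrite fsbig_finType; apply: eq_bigl => I; apply/asboolP/eqP.
Qed.

End SquarefreeProducts.

Lemma fsbig_support (R : pzSemiRingType) (T : choiceType) (X : set T) (g : T -> R) :
  finite_set [set t | g t != 0] ->
  \sum_(t \in X) g t = \sum_(t <- fset_set [set t | g t != 0]) (t \in X)%:R * g t.
Proof.
move=> gfin; rewrite fsbig_mkcond -(fsbig_widen [set t | g t != 0] setT) //; last first.
  by move=> t [_ /negP/negbNE/eqP g0]; rewrite /patch /=; case: ifP.
rewrite fsbig_finite //; apply: eq_bigr => t _.
by rewrite /patch; case: ifP; rewrite ?mul1r ?mul0r.
Qed.

Section InclusionExclusion.
Variables (n : nat) (ds x : 'I_n -> nat).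
Hypotheses (ds_prime : forall i, prime (ds i)) (ds_inj : injective ds).
Hypothesis x_pos : forall i, (0 < x i)%N.
Local Notation delta := (delta_of ds x).

Lemma lhs_set_incl_excl (R : pzRingType) (A : 'M[rat]_2) :
  \sum_(I : {set 'I_n}) (-1) ^+ #|I| * (A \in rank1_set delta (prodI ds I))%:R =
  (A \in lhs_set ds delta)%:R :> R.
Proof.
have [[j [q [c [e [jq ce dc _ ->]]]]]|notA] := pselect (rank1_set delta 1 A); last first.
  have notin S : S `<=` rank1_set delta 1 -> (A \in S) = false.
    by move=> S1; apply/negbTE/negP => /set_mem/S1.
  rewrite notin; last exact: lhs_set_sub.
  by rewrite big1 // => I _; rewrite notin ?mulr0 //; apply: rank1_set_sub1.
have inI I :
    (rank1_mx delta j q c e \in rank1_set delta (prodI ds I)) = (prodI ds I %| `|q|)%N.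
  apply/idP/idP => [/set_mem/rank1_setP|/rank1_setP/mem_set]; apply=> //; exact: delta_gt0.
have inL :
    (rank1_mx delta j q c e \in lhs_set ds delta) = \big[andb/true]_i ~~ (ds i %| `|q|)%N.
  rewrite big_andE; apply/idP/forallP; last by move/lhs_set_rank1P/mem_set; apply.
  by move/set_mem/lhs_set_rank1P; apply.
under eq_bigr => I _ do rewrite inI prodI_dvdn // natr_bigand.
rewrite sum_subsets_sign inL natr_bigand; apply: eq_bigr => i _.
by case: (ds i %| _)%N; rewrite ?subrr ?subr0.
Qed.

Lemma lhs_sum_incl_excl (R : pzRingType) (f : 'M[rat]_2 -> R) :
  finite_set [set A | f A != 0] ->
  \sum_(A \in lhs_set ds delta) f A =
  \sum_(I : {set 'I_n}) (-1) ^+ #|I| * \sum_(A \in rank1_set delta (prodI ds I)) f A.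
Proof.
move=> f_fin; rewrite fsbig_support //.
under [RHS]eq_bigr => I _ do rewrite fsbig_support // big_distrr.
rewrite exchange_big; apply: eq_bigr => A _ /=.
by rewrite -lhs_set_incl_excl big_distrl; apply: eq_bigr => I _; rewrite mulrA.
Qed.

End InclusionExclusion.

Unset Implicit Arguments.

Theorem lemma4p6 (n : nat) (ds : 'I_n -> nat) (x : 'I_n -> nat)
  (ds_prime : forall i, prime (ds i)) (ds_inj : injective ds)
  (x_pos : forall i, (0 < x i)%N)
  (Rep : set 'M[int]_2) (hRep : T_transversal (delta_of ds x) Rep)
  (R : numFieldType) (f : 'M[rat]_2 -> R)
  (f_fin : finite_set [set A | f A != 0]) :
  let delta := delta_of ds x in
  \sum_(A \in lhs_set ds delta) f A =
  2^-1 * \sum_(l < n.+1) (-1) ^+ l *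
     \sum_(d \in Cl ds l)
        \sum_(y \in rhs_idx Rep) f (Bmat delta d y.1.1 y.1.2 *m map_mx intr y.2).
Proof.
move=> delta; rewrite (lhs_sum_incl_excl ds_prime ds_inj x_pos f_fin) -sum_by_card.
under [in RHS]eq_bigr => l _.
  rewrite fsbig_Cl //.
  under eq_bigr => I _
    do rewrite (sum_rhs_idx (delta_gt0 _ ds_prime) (prodI_gt0 ds_prime I) hRep f_fin).
  by rewrite sumrMnl mulrnAr; over.
by rewrite sumrMnl mulrnAr -mulrnAl -mulr_natr mulVf ?mul1r // pnatr_eq0.
Qed.
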